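(* Let $H=\ell^2$ with standard unit vectors $e_k$, and define $f:H\to\mathbb{R}\cup\{+\infty\}$ by $f(\frac1ke_k)=\frac{1}{k^3}$ for $k=1,2,\dots$, $f(0)=0$, and $f(x)=+\infty$ otherwise. Then $f$ is proper and lower semicontinuous, $\bar x=0$ is a global minimizer of $f$ with $0\in\partial_pf(0)$, and $f''_-(0,0,h)=+\infty$ for every $h\in S_H$; nevertheless $0$ is not a strict local minimizer of order two for $f$.
   Context: $S_H$ is the unit sphere of $H$; $B(x,\delta)$ the open ball. $\bar x$ is a strict local minimizer of order two for $f$ if there exist $\beta,\delta>0$ with $f(x)\ge f(\bar x)+\frac{\beta}{2}\|x-\bar x\|^2$ for all $x\in B(\bar x,\delta)$. Proximal subdifferential: $\zeta\in\partial_p f(x)$ iff there exist $\sigma,\delta>0$ with $f(y)\ge f(x)+\langle\zeta,y-x\rangle-\frac{\sigma}{2}\|y-x\|^2$ whenever $\|y-x\|<\delta$. $f''_-(\bar x,p,h):=\liminf_{h'\to h,\,t\downarrow0}\frac{f(\bar x+th')-f(\bar x)-t\langle p,h'\rangle}{\frac12t^2}$. *)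

From Stdlib Require Import Reals Lra ClassicalEpsilon.
Open Scope R_scope.

(** The Hilbert space H = l^2: real sequences (indexed by nat, coordinate j
    corresponds to the paper's unit vector e_(j+1)) that are square-summable. *)
Definition seqH := nat -> R.

Definition is_l2 (x : seqH) : Prop :=
  exists l, infinite_sum (fun k => x k ^ 2) l.

(** Value of a convergent series (chosen by epsilon; unique when it exists). *)
Definition series_val (a : nat -> R) : R :=
  epsilon (inhabits 0) (fun l => infinite_sum a l).

Definition zeroH : seqH := fun _ => 0.
Definition addH (x y : seqH) : seqH := fun k => x k + y k.
Definition subH (x y : seqH) : seqH := fun k => x k - y k.
Definition scalH (t : R) (x : seqH) : seqH := fun k => t * x k.

Definition innerH (x y : seqH) : R := series_val (fun k => x k * y k).
Definition normH (x : seqH) : R := sqrt (series_val (fun k => x k ^ 2)).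

Definition unitH (k : nat) : seqH := fun j => if Nat.eqb j k then 1 else 0.

Inductive ER : Type := Fin (r : R) | PInf.

Definition ER_le (a b : ER) : Prop :=
  match a, b with
  | _, PInf => True
  | PInf, Fin _ => False
  | Fin x, Fin y => x <= y
  end.

Definition ER_lt_r (r : R) (b : ER) : Prop :=
  match b with Fin y => r < y | PInf => True end.

Definition ER_plus_r (a : ER) (c : R) : ER :=
  match a with Fin x => Fin (x + c) | PInf => PInf end.

(** proper: never -oo (built into ER) and not identically +oo on H *)
Definition proper (f : seqH -> ER) : Prop :=
  exists x, is_l2 x /\ f x <> PInf.

Definition lsc (f : seqH -> ER) : Prop :=
  forall x, is_l2 x -> forall r : R, ER_lt_r r (f x) ->
    exists delta, delta > 0 /\
      forall y, is_l2 y -> normH (subH y x) < delta -> ER_lt_r r (f y).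

Definition global_minimizer (f : seqH -> ER) (xbar : seqH) : Prop :=
  forall x, is_l2 x -> ER_le (f xbar) (f x).

Definition prox_subdiff (f : seqH -> ER) (x zeta : seqH) : Prop :=
  is_l2 zeta /\
  exists a, f x = Fin a /\
  exists sigma delta, sigma > 0 /\ delta > 0 /\
    forall y, is_l2 y -> normH (subH y x) < delta ->
      ER_le (Fin (a + innerH zeta (subH y x) - sigma / 2 * normH (subH y x) ^ 2)) (f y).

Definition second_quot (f : seqH -> ER) (x : seqH) (a : R) (p : seqH) (t : R) (h' : seqH) : ER :=
  match f (addH x (scalH t h')) with
  | PInf => PInf
  | Fin v => Fin ((v - a - t * innerH p h') / (t ^ 2 / 2))
  end.

(** f''_-(x,p,h) = +oo, i.e. the liminf over h' -> h (h' in H), t ↓ 0 is +oo *)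
Definition second_subderiv_PInf (f : seqH -> ER) (x p h : seqH) : Prop :=
  exists a, f x = Fin a /\
  forall M : R, exists delta, delta > 0 /\
    forall h' t, is_l2 h' -> normH (subH h' h) < delta -> 0 < t < delta ->
      ER_lt_r M (second_quot f x a p t h').

Definition strict_lmin2 (f : seqH -> ER) (xbar : seqH) : Prop :=
  exists beta delta, beta > 0 /\ delta > 0 /\
    forall x, is_l2 x -> normH (subH x xbar) < delta ->
      ER_le (ER_plus_r (f xbar) (beta / 2 * normH (subH x xbar) ^ 2)) (f x).

(* The function is finite only on the set S = {0} ∪ {e_k/k}, which is discrete away from 0 and
   accumulates only at 0, where f attains its minimum 0; this gives lower semicontinuity, global
   minimality and 0 ∈ ∂_p f(0).  A unit direction h keeps most of its mass on finitely many
   coordinates, so for h' near h and small t > 0 the point t h' lies outside S and the second-order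
   quotient is +∞.  Along the sequence e_k/k, however, f decays like the cube of the norm, which
   rules out quadratic growth. *)
From Stdlib Require Import Reals Lra Lia Classical ClassicalEpsilon FunctionalExtensionality.
From Coquelicot Require Import Coquelicot.
Open Scope R_scope.

Lemma infinite_sum_single (a : nat -> R) (k : nat) :
  (forall j, j <> k -> a j = 0) -> infinite_sum a (a k).
Proof.
  intros Ha.
  assert (Hsum : forall n, (k <= n)%nat -> sum_f_R0 a n = a k).
  { induction n as [|n IH]; intros Hkn.
    - replace k with 0%nat by lia. reflexivity.
    - rewrite tech5. destruct (Nat.eq_dec k (S n)) as [->|Hk].
      + rewrite sum_eq_R0; [ring|]. intros j Hj. apply Ha. lia.
      + rewrite IH, (Ha (S n)) by lia. ring. }
  intros e He. exists k. intros n Hn.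
  rewrite Hsum by lia. unfold Rdist. rewrite Rminus_diag, Rabs_R0. lra.
Qed.

Lemma infinite_sum_0 : infinite_sum (fun _ => 0) 0.
Proof. exact (infinite_sum_single (fun _ => 0) 0 (fun _ _ => eq_refl)). Qed.

Lemma series_val_eq (a : nat -> R) (l : R) : infinite_sum a l -> series_val a = l.
Proof.
  intros Hl. apply (uniqueness_sum a); [|exact Hl].
  apply (epsilon_spec (inhabits 0) (fun l => infinite_sum a l)). eauto.
Qed.

Lemma is_l2_ex_series (x : seqH) : is_l2 x <-> ex_series (fun k => x k ^ 2).
Proof. split; intros [l Hl]; exists l; apply is_series_Reals; exact Hl. Qed.

Lemma is_l2_zero : is_l2 zeroH.
Proof.
  exists 0. replace (fun k => zeroH k ^ 2) with (fun _ : nat => 0); [exact infinite_sum_0|].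
  apply functional_extensionality. intro. unfold zeroH. ring.
Qed.

Lemma is_l2_sub (x y : seqH) : is_l2 x -> is_l2 y -> is_l2 (subH x y).
Proof.
  rewrite !is_l2_ex_series. intros Hx Hy.
  apply (@ex_series_le R_AbsRing R_CompleteNormedModule _ (fun n => 2 * x n ^ 2 + 2 * y n ^ 2)).
  - intro n. unfold subH, norm; simpl. rewrite Rabs_pos_eq by apply pow2_ge_0.
    pose proof (pow2_ge_0 (x n + y n)). nra.
  - apply (@ex_series_plus R_AbsRing R_NormedModule (fun n => 2 * x n ^ 2) (fun n => 2 * y n ^ 2));
      apply (@ex_series_scal R_AbsRing R_NormedModule 2); assumption.
Qed.

Lemma is_l2_scal (t : R) (x : seqH) : is_l2 x -> is_l2 (scalH t x).
Proof.
  rewrite !is_l2_ex_series. intros Hx.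
  apply (ex_series_ext (fun n => scal (t ^ 2) (x n ^ 2))).
  - intro n. unfold scalH, scal; simpl. unfold mult; simpl. ring.
  - apply (@ex_series_scal R_AbsRing R_NormedModule). exact Hx.
Qed.

Lemma innerH_zero_l (x : seqH) : innerH zeroH x = 0.
Proof.
  unfold innerH. replace (fun k => zeroH k * x k) with (fun _ : nat => 0).
  - apply series_val_eq, infinite_sum_0.
  - apply functional_extensionality. intro. unfold zeroH. ring.
Qed.

Lemma normH_ge0 (x : seqH) : 0 <= normH x.
Proof. apply sqrt_pos. Qed.

Lemma normH_sqr (x : seqH) (l : R) : infinite_sum (fun k => x k ^ 2) l -> normH x ^ 2 = l.
Proof.
  intros Hl. unfold normH. rewrite (series_val_eq _ _ Hl). apply pow2_sqrt.
  apply Rle_trans with (sum_f_R0 (fun k => x k ^ 2) 0).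
  - apply cond_pos_sum. intro. apply pow2_ge_0.
  - apply sum_incr; [exact Hl|]. intro. apply pow2_ge_0.
Qed.

Lemma partial_sum_sq_le_normH (x : seqH) (n : nat) :
  is_l2 x -> sum_f_R0 (fun k => x k ^ 2) n <= normH x ^ 2.
Proof.
  intros [l Hl]. rewrite (normH_sqr x l Hl).
  apply sum_incr; [exact Hl|]. intro. apply pow2_ge_0.
Qed.

Lemma Rabs_coord_le_normH (x : seqH) (j : nat) : is_l2 x -> Rabs (x j) <= normH x.
Proof.
  intros Hx. rewrite <- (Rabs_pos_eq (normH x)) by apply normH_ge0.
  apply Rsqr_le_abs_0. rewrite !Rsqr_pow2.
  apply Rle_trans with (sum_f_R0 (fun k => x k ^ 2) j);
    [|apply partial_sum_sq_le_normH; exact Hx].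
  destruct j as [|j]; [simpl; lra|].
  rewrite tech5. pose proof (cond_pos_sum (fun k => x k ^ 2) j (fun k => pow2_ge_0 (x k))). lra.
Qed.

Lemma coord_neq_of_normH_lt (x y : seqH) (j : nat) (c : R) :
  is_l2 x -> is_l2 y -> normH (subH y x) < Rabs (x j - c) -> y j <> c.
Proof.
  intros Hx Hy Hlt Hyj.
  pose proof (Rabs_coord_le_normH (subH y x) j (is_l2_sub y x Hy Hx)) as Hj.
  change (subH y x j) with (y j - x j) in Hj. rewrite Hyj, Rabs_minus_sym in Hj. lra.
Qed.

Definition pt (k : nat) : seqH := scalH (1 / (INR k + 1)) (unitH k).

Lemma inv_succ_gt0 (k : nat) : 0 < 1 / (INR k + 1).
Proof. pose proof (pos_INR k). apply Rdiv_lt_0_compat; lra. Qed.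

Lemma pt_coord_eq (k : nat) : pt k k = 1 / (INR k + 1).
Proof. unfold pt, scalH, unitH. rewrite Nat.eqb_refl. ring. Qed.

Lemma pt_coord_neq (k j : nat) : j <> k -> pt k j = 0.
Proof. intros Hjk. unfold pt, scalH, unitH. apply Nat.eqb_neq in Hjk. rewrite Hjk. ring. Qed.

Lemma infinite_sum_sq_pt (k : nat) : infinite_sum (fun j => pt k j ^ 2) ((1 / (INR k + 1)) ^ 2).
Proof.
  rewrite <- pt_coord_eq. apply (infinite_sum_single (fun j => pt k j ^ 2)).
  intros j Hj. rewrite pt_coord_neq by exact Hj. ring.
Qed.

Lemma is_l2_pt (k : nat) : is_l2 (pt k).
Proof. eexists. apply infinite_sum_sq_pt. Qed.

Lemma normH_pt (k : nat) : normH (pt k) = 1 / (INR k + 1).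
Proof.
  pose proof (inv_succ_gt0 k).
  rewrite <- (sqrt_pow2 (normH (pt k))) by apply normH_ge0.
  rewrite (normH_sqr _ _ (infinite_sum_sq_pt k)). apply sqrt_pow2. lra.
Qed.

Lemma pt_isolated (k : nat) (y : seqH) :
  is_l2 y -> normH (subH y (pt k)) < 1 / (INR k + 1) ->
  y <> zeroH /\ forall m, m <> k -> y <> pt m.
Proof.
  intros Hy Hn.
  assert (Hyk : y k <> 0).
  { apply (coord_neq_of_normH_lt (pt k)); [apply is_l2_pt|exact Hy|].
    rewrite pt_coord_eq, Rminus_0_r, Rabs_pos_eq by (pose proof (inv_succ_gt0 k); lra). exact Hn. }
  split.
  - intros ->. apply Hyk. reflexivity.
  - intros m Hmk ->. apply Hyk. apply pt_coord_neq. congruence.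
Qed.

(* A point outside S has either two nonzero coordinates, or one nonzero coordinate whose value
   differs from that of the corresponding [pt]; both are open conditions. *)
Lemma ball_outside_pts (x : seqH) :
  is_l2 x -> x <> zeroH -> (forall k, x <> pt k) ->
  exists delta, delta > 0 /\
    forall y, is_l2 y -> normH (subH y x) < delta -> y <> zeroH /\ forall m, y <> pt m.
Proof.
  intros Hx Hx0 Hxpt.
  assert (Hj : exists j, x j <> 0).
  { apply NNPP. intro Hno. apply Hx0, functional_extensionality. intro j.
    apply NNPP. intro Hxj. apply Hno. exists j. exact Hxj. }
  destruct Hj as [j Hj].
  pose proof (Rabs_pos_lt _ Hj) as Hjpos.
  destruct (classic (exists i, i <> j /\ x i <> 0)) as [[i [Hij Hi]]|Hsingle].
  - pose proof (Rabs_pos_lt _ Hi) as Hipos.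
    exists (Rmin (Rabs (x i)) (Rabs (x j))). split; [apply Rmin_glb_lt; assumption|].
    intros y Hy Hn.
    assert (Hyi : y i <> 0).
    { apply (coord_neq_of_normH_lt x); [exact Hx|exact Hy|].
      rewrite Rminus_0_r. pose proof (Rmin_l (Rabs (x i)) (Rabs (x j))). lra. }
    assert (Hyj : y j <> 0).
    { apply (coord_neq_of_normH_lt x); [exact Hx|exact Hy|].
      rewrite Rminus_0_r. pose proof (Rmin_r (Rabs (x i)) (Rabs (x j))). lra. }
    split.
    + intros ->. apply Hyi. reflexivity.
    + intros m ->. destruct (Nat.eq_dec i m) as [->|Him].
      * apply Hyj, pt_coord_neq. exact (not_eq_sym Hij).
      * apply Hyi, pt_coord_neq. exact Him.
  - set (c := 1 / (INR j + 1)).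
    assert (Hxc : x j <> c).
    { intros Hxj. apply (Hxpt j), functional_extensionality. intro i.
      destruct (Nat.eq_dec i j) as [->|Hij]; [rewrite pt_coord_eq; exact Hxj|].
      rewrite pt_coord_neq by exact Hij.
      apply NNPP. intro Hxi. apply Hsingle. exists i. split; assumption. }
    pose proof (Rabs_pos_lt (x j - c) ltac:(lra)) as Hcpos.
    exists (Rmin (Rabs (x j)) (Rabs (x j - c))). split; [apply Rmin_glb_lt; assumption|].
    intros y Hy Hn.
    assert (Hyj : y j <> 0).
    { apply (coord_neq_of_normH_lt x); [exact Hx|exact Hy|].
      rewrite Rminus_0_r. pose proof (Rmin_l (Rabs (x j)) (Rabs (x j - c))). lra. }
    assert (Hyc : y j <> c).
    { apply (coord_neq_of_normH_lt x); [exact Hx|exact Hy|].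
      pose proof (Rmin_r (Rabs (x j)) (Rabs (x j - c))). lra. }
    split.
    + intros ->. apply Hyj. reflexivity.
    + intros m ->. destruct (Nat.eq_dec j m) as [->|Hjm].
      * apply Hyc, pt_coord_eq.
      * apply Hyj, pt_coord_neq. exact Hjm.
Qed.

Lemma partial_sum_sq_le_normH_sub (h h' : seqH) (N : nat) :
  is_l2 h -> is_l2 h' -> (forall j, (j <= N)%nat -> h' j = 0) ->
  sum_f_R0 (fun k => h k ^ 2) N <= normH (subH h' h) ^ 2.
Proof.
  intros Hh Hh' Hz.
  rewrite (sum_eq _ (fun k => subH h' h k ^ 2)).
  - apply partial_sum_sq_le_normH, is_l2_sub; assumption.
  - intros j Hj. unfold subH. rewrite Hz by exact Hj. ring.
Qed.

(* [N0] captures half of the mass of [h]; a nearby [h'] cannot vanish on the first [N0 + 1]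
   coordinates, so [t h' = e_m / m] forces [m <= N0] and hence [t > 1 / (2 (N0 + 1))]. *)
Lemma small_ray_outside_pts (h : seqH) :
  is_l2 h -> normH h = 1 ->
  exists delta, delta > 0 /\
    forall h' t, is_l2 h' -> normH (subH h' h) < delta -> 0 < t < delta ->
      scalH t h' <> zeroH /\ forall m, scalH t h' <> pt m.
Proof.
  intros Hh Hn1.
  assert (HN : exists N0, 1 / 2 < sum_f_R0 (fun k => h k ^ 2) N0).
  { destruct Hh as [l Hl].
    assert (Hl1 : l = 1) by (rewrite <- (normH_sqr h l Hl), Hn1; ring). subst l.
    destruct (Hl (1 / 2)) as [N HN]; [lra|]. exists N. specialize (HN N (le_n N)).
    unfold Rdist in HN. apply Rabs_def2 in HN. lra. }
  destruct HN as [N0 HN0]. pose proof (pos_INR N0) as HN0pos.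
  set (delta := 1 / (2 * (INR N0 + 2))).
  assert (Hdelta : 0 < delta) by (apply Rdiv_lt_0_compat; lra).
  assert (Hdelta4 : delta <= 1 / 4)
    by (unfold delta, Rdiv; rewrite !Rmult_1_l; apply Rinv_le_contravar; lra).
  exists delta. split; [exact Hdelta|]. intros h' t Hh' Hd Ht.
  assert (Hsupport : ~ (forall j, (j <= N0)%nat -> h' j = 0)).
  { intros Hz. pose proof (partial_sum_sq_le_normH_sub h h' N0 Hh Hh' Hz).
    pose proof (normH_ge0 (subH h' h)). nra. }
  assert (Hcoord : forall j, scalH t h' j = 0 -> h' j = 0).
  { intros j Hj. unfold scalH in Hj. destruct (Rmult_integral _ _ Hj); [lra|assumption]. }
  split.
  - intros E. apply Hsupport. intros j _. apply Hcoord. rewrite E. reflexivity.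
  - intros m E.
    assert (HmN : (m <= N0)%nat).
    { destruct (Compare_dec.le_lt_dec m N0) as [|HNm]; [assumption|]. exfalso. apply Hsupport.
      intros j Hj. apply Hcoord. rewrite E. apply pt_coord_neq. lia. }
    assert (Hh'm : h' m < 2).
    { pose proof (Rabs_coord_le_normH (subH h' h) m (is_l2_sub _ _ Hh' Hh)) as Hd'.
      pose proof (Rabs_coord_le_normH h m Hh) as Hhm. rewrite Hn1 in Hhm.
      change (subH h' h m) with (h' m - h m) in Hd'.
      pose proof (Rle_abs (h m)). pose proof (Rle_abs (h' m - h m)). lra. }
    pose proof (equal_f E m) as Em. unfold scalH in Em. rewrite pt_coord_eq in Em.
    assert (Htm : t * h' m < 1 / (INR N0 + 2)).
    { replace (1 / (INR N0 + 2)) with (2 * delta) by (unfold delta; field; lra).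
      assert (0 < (2 - h' m) * t) by (apply Rmult_lt_0_compat; lra). lra. }
    rewrite Em in Htm. apply le_INR in HmN.
    assert (Hle : 1 / (INR N0 + 2) <= 1 / (INR m + 1)).
    { unfold Rdiv. rewrite !Rmult_1_l. pose proof (pos_INR m). apply Rinv_le_contravar; lra. }
    lra.
Qed.

Lemma ex_pt_cube_lt_sq (beta delta : R) :
  0 < beta -> 0 < delta ->
  exists k, 1 / (INR k + 1) < delta /\
            1 / (INR k + 1) ^ 3 < beta / 2 * (1 / (INR k + 1)) ^ 2.
Proof.
  intros Hb Hd. destruct (INR_unbounded (1 / delta + 2 / beta)) as [k Hk].
  assert (0 < 1 / delta) by (apply Rdiv_lt_0_compat; lra).
  assert (0 < 2 / beta) by (apply Rdiv_lt_0_compat; lra).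
  exists k. set (K := INR k + 1) in *. assert (HK : 0 < K) by (unfold K; lra).
  split.
  - apply (Rmult_lt_reg_r (K / delta)); [apply Rdiv_lt_0_compat; lra|].
    replace (1 / K * (K / delta)) with (1 / delta) by (field; lra).
    replace (delta * (K / delta)) with K by (field; lra). unfold K. lra.
  - apply (Rmult_lt_reg_r (2 * K ^ 3 / beta)); [apply Rdiv_lt_0_compat; [|lra]; apply Rmult_lt_0_compat; [lra|apply pow_lt; lra]|].
    replace (1 / K ^ 3 * (2 * K ^ 3 / beta)) with (2 / beta) by (field; lra).
    replace (beta / 2 * (1 / K) ^ 2 * (2 * K ^ 3 / beta)) with K by (field; lra).
    unfold K. lra.
Qed.

Section Example.

Variable f : seqH -> ER.
Hypothesis f_pt : forall k, f (pt k) = Fin (1 / (INR k + 1) ^ 3).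
Hypothesis f_zero : f zeroH = Fin 0.
Hypothesis f_elsewhere : forall x, is_l2 x -> x <> zeroH -> (forall k, x <> pt k) -> f x = PInf.

Lemma f_cases (y : seqH) : is_l2 y -> y = zeroH \/ (exists m, y = pt m) \/ f y = PInf.
Proof.
  intros Hy. destruct (classic (y = zeroH)) as [|H0]; [left; assumption|].
  destruct (classic (exists m, y = pt m)) as [|Hpt]; [right; left; assumption|].
  right; right. apply f_elsewhere; [exact Hy|exact H0|]. intros k E. apply Hpt. exists k. exact E.
Qed.

Lemma f_ge0 (y : seqH) : is_l2 y -> ER_le (Fin 0) (f y).
Proof.
  intros Hy. destruct (f_cases y Hy) as [->|[[m ->]| ->]].
  - rewrite f_zero. apply Rle_refl.
  - rewrite f_pt; cbn [ER_le]. pose proof (pos_INR m).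
    apply Rlt_le, Rdiv_lt_0_compat; [lra|apply pow_lt; lra].
  - exact I.
Qed.

Lemma f_proper : proper f.
Proof. exists zeroH. split; [exact is_l2_zero|]. rewrite f_zero. discriminate. Qed.

Lemma f_lsc : lsc f.
Proof.
  intros x Hx r Hr. destruct (f_cases x Hx) as [->|[[k ->]|Hinf]].
  - rewrite f_zero in Hr. exists 1. split; [lra|]. intros y Hy _.
    pose proof (f_ge0 y Hy). destruct (f y); simpl in *; [lra|exact I].
  - rewrite f_pt in Hr. exists (1 / (INR k + 1)). split; [apply inv_succ_gt0|].
    intros y Hy Hn. destruct (pt_isolated k y Hy Hn) as [Hy0 Hym].
    destruct (f_cases y Hy) as [->|[[m ->]| ->]]; [contradiction| |exact I].
    destruct (Nat.eq_dec m k) as [->|Hmk]; [rewrite f_pt; exact Hr|].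
    exfalso. exact (Hym m Hmk eq_refl).
  - assert (Hx0 : x <> zeroH) by (intros ->; rewrite f_zero in Hinf; discriminate).
    assert (Hxpt : forall k, x <> pt k) by (intros k ->; rewrite f_pt in Hinf; discriminate).
    destruct (ball_outside_pts x Hx Hx0 Hxpt) as [delta [Hdelta Hball]].
    exists delta. split; [exact Hdelta|]. intros y Hy Hn.
    destruct (Hball y Hy Hn). rewrite f_elsewhere by assumption. exact I.
Qed.

Lemma f_global_min : global_minimizer f zeroH.
Proof. intros x Hx. rewrite f_zero. apply f_ge0. exact Hx. Qed.

Lemma f_prox_subdiff_zero : prox_subdiff f zeroH zeroH.
Proof.
  split; [exact is_l2_zero|]. exists 0. split; [exact f_zero|].
  exists 1, 1. split; [lra|]. split; [lra|]. intros y Hy _.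
  rewrite innerH_zero_l. pose proof (f_ge0 y Hy).
  pose proof (pow2_ge_0 (normH (subH y zeroH))).
  destruct (f y); simpl in *; [lra|exact I].
Qed.

Lemma f_second_subderiv (h : seqH) :
  is_l2 h -> normH h = 1 -> second_subderiv_PInf f zeroH zeroH h.
Proof.
  intros Hh Hn1. exists 0. split; [exact f_zero|]. intros M.
  destruct (small_ray_outside_pts h Hh Hn1) as [delta [Hdelta Hray]].
  exists delta. split; [exact Hdelta|]. intros h' t Hh' Hd Ht.
  unfold second_quot.
  replace (addH zeroH (scalH t h')) with (scalH t h')
    by (apply functional_extensionality; intro; unfold addH, zeroH; ring).
  destruct (Hray h' t Hh' Hd Ht).
  rewrite f_elsewhere by (try apply is_l2_scal; assumption). exact I.
Qed.

Lemma f_not_strict_lmin2 : ~ strict_lmin2 f zeroH.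
Proof.
  intros [beta [delta [Hb [Hd Hgrowth]]]].
  destruct (ex_pt_cube_lt_sq beta delta Hb Hd) as [k [Hkd Hk]].
  assert (Hsub : subH (pt k) zeroH = pt k)
    by (apply functional_extensionality; intro; unfold subH, zeroH; ring).
  specialize (Hgrowth (pt k) (is_l2_pt k)).
  rewrite Hsub, normH_pt, f_zero, f_pt in Hgrowth. cbn [ER_le ER_plus_r] in Hgrowth.
  specialize (Hgrowth Hkd). lra.
Qed.

End Example.

Theorem mainTheorem13 (f : seqH -> ER)
  (Hpts : forall k : nat,
      f (scalH (1 / (INR k + 1)) (unitH k)) = Fin (1 / (INR k + 1) ^ 3))
  (H0 : f zeroH = Fin 0)
  (Hinf : forall x, is_l2 x -> x <> zeroH ->
      (forall k : nat, x <> scalH (1 / (INR k + 1)) (unitH k)) -> f x = PInf) :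
  proper f /\ lsc f /\ global_minimizer f zeroH /\ prox_subdiff f zeroH zeroH /\
  (forall h, is_l2 h -> normH h = 1 -> second_subderiv_PInf f zeroH zeroH h) /\
  ~ strict_lmin2 f zeroH.
Proof.
  split; [exact (f_proper f H0)|].
  split; [exact (f_lsc f Hpts H0 Hinf)|].
  split; [exact (f_global_min f Hpts H0 Hinf)|].
  split; [exact (f_prox_subdiff_zero f Hpts H0 Hinf)|].
  split; [exact (f_second_subderiv f H0 Hinf)|].
  exact (f_not_strict_lmin2 f Hpts H0).
Qed.
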